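(* Let $p,q$ be positive integers with $p/q\ge4$, $k=\lfloor p/q\rfloor$, $r=p-kq\ge1$, and let $G'$ be the graph constructed from a graph $G$ as in the context. Let $h$ and $h'$ be $k$-colourings of $G$ which differ on exactly one vertex $u$, and let $\eta$ be a $(p,q)$-colouring of $G'$ such that $\eta(y_i)=i$ for all $i$, the restriction of $\eta$ to $V(G)$ is $\gamma\circ h$, and every path $P_{ab}$ has the standard path colouring with respect to $\eta$. Then there exists a $(p,q)$-colouring $\eta'$ of $G'$ such that every path $P_{ab}$ has the standard path colouring with respect to $\eta'$, the restriction of $\eta'$ to $V(G)$ is $\gamma\circ h'$, and $\eta$ reconfigures to $\eta'$.
   Context: Intervals $[a,b]=\{a,a+1,\dots,b\}$ are taken modulo $p$. A $(p,q)$-colouring is a map to $\{0,\dots,p-1\}$ with $q\le|\psi(x)-\psi(y)|\le p-q$ on every edge; a $k$-colouring is a proper colouring with colours $\{0,\dots,k-1\}$; $\eta$ reconfigures to $\eta'$ if there is a sequence of $(p,q)$-colourings of $G'$ from $\eta$ to $\eta'$, consecutive ones differing on at most one vertex. Let $t$ be the smallest positive integer with $(t+1)q\equiv r\pmod p$, and $\gamma(0)=0$, $\gamma(i)=iq+r$ for $1\le i\le k-1$. $G'$ is obtained from $G$ by adding a disjoint copy of the circular clique on $y_0,\dots,y_{p-1}$ ($y_iy_j$ an edge iff $q\le|i-j|\le p-q$), and for every edge $uv$ of $G$ two new paths $P_{uv}=u\,x_0^{uv}\cdots x_t^{uv}\,v$ and $P_{vu}=v\,x_0^{vu}\cdots x_t^{vu}\,u$,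 internally disjoint from everything else and each other, where $x_0^{ab},x_t^{ab}$ are joined to all $y_j$ with $j\in[3q-1,p-q-1]$ and $x_i^{ab}$ ($1\le i\le t-1$) to all $y_j$ with $j\in[(i+3)q-1,(i-1)q]$. A path $P_{ab}$ has the standard path colouring with respect to a colouring $\eta$ (whose values on $V(G)$ lie in $\{\gamma(0),\dots,\gamma(k-1)\}$) if: when $\eta(a)=0$, $\eta(x_i^{ab})=(i+1)q\bmod p$ for $0\le i\le t$; when $\eta(b)=0$, $\eta(x_i^{ab})=iq\bmod p$ for $0\le i\le t-1$ and $\eta(x_t^{ab})=q$; when $\eta(a)\ne0\ne\eta(b)$, $\eta(x_i^{ab})=iq\bmod p$ for $0\le i\le t-1$ and $\eta(x_t^{ab})=0$. *)

From mathcomp Require Import all_boot.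

Set Implicit Arguments.
Unset Strict Implicit.
Unset Printing Implicit Defensive.

Definition kk (p q : nat) : nat := p %/ q.
Definition rr (p q : nat) : nat := p %% q.

Definition absd (m n : nat) : nat := (m - n) + (n - m).

Definition pq_ok (p q c d : nat) : Prop := q <= absd c d /\ absd c d <= p - q.

(* j belongs to the cyclic interval [a,b] = {a, a+1, ..., b} taken mod p *)
Definition in_cyc (p a b j : nat) : bool :=
  (j + p - a %% p) %% p <= (b %% p + p - a %% p) %% p.

Definition gamma (p q i : nat) : nat := if i == 0 then 0 else i * q + rr p q.

(* ordered pairs (a,b) with ab an edge of G: each edge uv gives P_uv and P_vu *)
Definition dedge (T : finType) (e : rel T) := {ab : T * T | e ab.1 ab.2}.

(* vertices of G': V(G), y_0..y_{p-1}, and x_i^{ab} for 0 <= i <= t *)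
Inductive gvtx (T : finType) (e : rel T) (p t : nat) : Type :=
| VG of T
| VY of 'I_p
| VX of dedge e & 'I_t.+1.

Arguments VG {T e p t} _.
Arguments VY {T e p t} _.
Arguments VX {T e p t} _ _.

Definition gadj0 (T : finType) (e : rel T) (p q t : nat)
    (x y : gvtx e p t) : Prop :=
  match x, y with
  | VG u, VG v => e u v
  | VY i, VY j => pq_ok p q i j
  | VG a, VX ab i => (sval ab).1 = a /\ nat_of_ord i = 0
  | VX ab i, VX ab' j => ab = ab' /\ nat_of_ord j = (nat_of_ord i).+1
  | VX ab i, VG b => (sval ab).2 = b /\ nat_of_ord i = t
  | VX ab i, VY j =>
      if (nat_of_ord i == 0) || (nat_of_ord i == t)
      then in_cyc p (3 * q - 1) (p - q - 1) j
      else in_cyc p ((nat_of_ord i + 3) * q - 1) ((nat_of_ord i - 1) * q) j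
  | _, _ => False
  end.

Definition gadj (T : finType) (e : rel T) (p q t : nat) (x y : gvtx e p t) : Prop :=
  gadj0 q x y \/ gadj0 q y x.

Definition pqcol (T : finType) (e : rel T) (p q t : nat) (c : gvtx e p t -> nat) : Prop :=
  (forall x, c x < p) /\ (forall x y, gadj q x y -> pq_ok p q (c x) (c y)).

Definition kcol (T : finType) (e : rel T) (k : nat) (h : T -> nat) : Prop :=
  (forall v, h v < k) /\ (forall u v, e u v -> h u <> h v).

Definition std_path (T : finType) (e : rel T) (p q t : nat)
    (c : gvtx e p t -> nat) (ab : dedge e) : Prop :=
  forall i : 'I_t.+1,
    c (VX ab i) =
      if c (VG (sval ab).1) == 0 then ((nat_of_ord i).+1 * q) %% p
      else if c (VG (sval ab).2) == 0 then
        (if nat_of_ord i == t then q else (nat_of_ord i * q) %% p)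
      else (if nat_of_ord i == t then 0 else (nat_of_ord i * q) %% p).

Definition differ_le1 (V : Type) (c c' : V -> nat) : Prop :=
  forall w1 w2, c w1 <> c' w1 -> c w2 <> c' w2 -> w1 = w2.

Definition reconfig (T : finType) (e : rel T) (p q t : nat)
    (c c' : gvtx e p t -> nat) : Prop :=
  exists (n : nat) (f : nat -> gvtx e p t -> nat),
    (forall x, f 0 x = c x) /\ (forall x, f n x = c' x) /\
    (forall i, i <= n -> pqcol q (f i)) /\
    (forall i, i < n -> differ_le1 (f i) (f i.+1)).

From mathcomp Require Import all_boot zify.

Set Implicit Arguments.
Unset Strict Implicit.
Unset Printing Implicit Defensive.

(* All colourings met below are standard away from u: y_i gets i, every other
   vertex v of G gets gamma (h v), and every path gets its standard colouring,
   which depends on the colours of its ends only through whether they are 0.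
   So if neither h u nor h' u is 0, u is recoloured in a single step.
   Otherwise, by symmetry, h u = 0 < h' u = m.  The paths leaving u are coloured
   (i+1) q, those entering u are coloured i q with q on x_t, and both must end up
   coloured i q with 0 on x_t.  When m >= 2, u jumps to gamma m at once, after
   which the paths leaving u are lowered by q one vertex at a time, starting at
   x_0; when m = 1 a detour is needed (see reconfig_unit_colour).  Each move
   recolours u or the i-th vertex of all the paths at u; the latter are pairwise
   non-adjacent, so a move is a sequence of single-vertex recolourings. *)

Section Reconfiguration.
Variables (T : finType) (e : rel T) (p q t : nat).
Local Notation V := (gvtx e p t).

Lemma absdC a b : absd a b = absd b a.
Proof. by rewrite /absd addnC. Qed.

Lemma pq_okC c d : pq_ok p q c d -> pq_ok p q d c.
Proof. by rewrite /pq_ok absdC. Qed.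

Lemma differ_le1C (c d : V -> nat) : differ_le1 c d -> differ_le1 d c.
Proof. by move=> D w1 w2 H1 H2; apply: D => E; [apply: H1|apply: H2]. Qed.

Lemma eq_reconfig (c1 c2 d1 d2 : V -> nat) :
  c1 =1 c2 -> d1 =1 d2 -> reconfig q c1 d1 -> reconfig q c2 d2.
Proof.
move=> E1 E2 [n [f [F0 [Fn Ff]]]].
by exists n, f; split; [move=> x; rewrite F0 E1|split; [move=> x; rewrite Fn E2|]].
Qed.

Lemma reconfig_refl (c : V -> nat) : pqcol q c -> reconfig q c c.
Proof. by move=> Hc; exists 0, (fun _ => c). Qed.

Lemma reconfig_trans (c1 c2 c3 : V -> nat) :
  reconfig q c1 c2 -> reconfig q c2 c3 -> reconfig q c1 c3.
Proof.
move=> [n1 [f [F0 [Fn [Fc Fd]]]]] [n2 [g [G0 [Gn [Gc Gd]]]]].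
exists (n1 + n2), (fun i => if i <= n1 then f i else g (i - n1)).
split=> [x|]; first by rewrite /= F0.
split=> [x|].
  case: ifP => H; last by rewrite addKn Gn.
  have n2_0 : n2 = 0 by lia.
  by subst n2; rewrite addn0 Fn -G0 Gn.
split=> i Hi.
  by case: ifP => H; [exact: Fc|apply: Gc; lia].
case: ifP => H1; case: ifP => H2.
- by apply: Fd; lia.
- have -> : i = n1 by lia.
  rewrite subSnn; have D := Gd 0 (ltac:(lia)).
  by move=> w1 w2; rewrite !Fn -!G0; exact: D.
- lia.
- have -> : i.+1 - n1 = (i - n1).+1 by lia.
  by apply: Gd; lia.
Qed.

Lemma reconfig_sym (c1 c2 : V -> nat) : reconfig q c1 c2 -> reconfig q c2 c1.
Proof.
move=> [n [f [F0 [Fn [Fc Fd]]]]].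
exists n, (fun i => f (n - i)); split=> [x|]; first by rewrite subn0.
split=> [x|]; first by rewrite subnn.
split=> i Hi; first by apply: Fc; lia.
have -> : n - i = (n - i.+1).+1 by lia.
apply: differ_le1C; apply: Fd; lia.
Qed.

Lemma reconfig_chain (f : nat -> V -> nat) n : pqcol q (f 0) ->
  (forall s, s < n -> reconfig q (f s) (f s.+1)) -> reconfig q (f 0) (f n).
Proof.
move=> f0; elim: n => [|n IHn] Hf; first exact: reconfig_refl.
by apply: reconfig_trans (IHn _) (Hf n _) => // s Hs; apply: Hf; lia.
Qed.

Lemma pqcol_patch (c c' : V -> nat) (P : pred V) (D : V -> Prop) :
  pqcol q c -> pqcol q c' ->
  (forall x, c x <> c' x -> D x) -> (forall x y, D x -> D y -> ~ gadj q x y) ->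
  pqcol q (fun x => if P x then c' x else c x).
Proof.
move=> [B1 E1] [B2 E2] HD HI; split=> [x|x y Hxy]; first by case: (P x).
have [ex|/eqP/HD Dx] := eqVneq (c x) (c' x).
  by case: (P y); [rewrite ex|rewrite -ex]; case: (P x);
    [exact: E2|exact: E2|exact: E1|exact: E1].
have [ey|/eqP/HD Dy] := eqVneq (c y) (c' y); last by case: (HI x y Dx Dy).
by case: (P x); [rewrite ey|rewrite -ey]; case: (P y);
  [exact: E2|exact: E2|exact: E1|exact: E1].
Qed.

(* gvtx is not a finType; vtx_code embeds it into one, so that its vertices can
   be switched from one colouring to another one at a time in a fixed order. *)
Definition vtx_code (x : V) : T + ('I_p + (dedge e * 'I_t.+1)) :=
  match x with
  | VG v => inl v
  | VY i => inr (inl i)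
  | VX ab i => inr (inr (ab, i))
  end.

Lemma vtx_code_inj : injective vtx_code.
Proof. by case=> [a|a|a b] [c|c|c d] //= [] -> //; move=> ->. Qed.

Definition vtx_rank (x : V) : nat := enum_rank (vtx_code x).

Lemma vtx_rank_inj : injective vtx_rank.
Proof. by move=> x y /ord_inj /enum_rank_inj /vtx_code_inj. Qed.

Lemma reconfig_independent (c c' : V -> nat) (D : V -> Prop) :
  pqcol q c -> pqcol q c' ->
  (forall x, c x <> c' x -> D x) -> (forall x y, D x -> D y -> ~ gadj q x y) ->
  reconfig q c c'.
Proof.
move=> Hc Hc' HD HI.
exists #|{: T + ('I_p + (dedge e * 'I_t.+1))}|,
  (fun s x => if vtx_rank x < s then c' x else c x).
split=> // ; split=> [x|]; first by rewrite ltn_ord.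
split=> [i _|i _ w1 w2]; first exact: (pqcol_patch _ Hc Hc' HD HI).
have switched w : (if vtx_rank w < i then c' w else c w) <>
    (if vtx_rank w < i.+1 then c' w else c w) -> vtx_rank w = i.
  by case: ltnP => H1; case: ltnP => H2 //; lia.
by move=> /switched H1 /switched H2; apply: vtx_rank_inj; rewrite H1 H2.
Qed.

Definition col_of (g : T -> nat) (X : dedge e -> nat -> nat) : V -> nat :=
  fun x => match x with
  | VG v => g v
  | VY i => i
  | VX ab i => X ab i
  end.

Lemma reconfig_at_vertex g1 g2 X u : irreflexive e ->
  (forall v, v <> u -> g1 v = g2 v) ->
  pqcol q (col_of g1 X) -> pqcol q (col_of g2 X) ->
  reconfig q (col_of g1 X) (col_of g2 X).
Proof.
move=> Hirr E P1 P2; apply: (reconfig_independent (D := eq^~ (VG u))) => //.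
  case=> [v|i|ab i] //= H.
  by have [->|/eqP Nv] := eqVneq v u; last by case: H; apply: E.
by move=> x y -> ->; rewrite /gadj /= Hirr; case.
Qed.

Lemma reconfig_at_index g X1 X2 i0 :
  (forall ab j, j <> i0 -> X1 ab j = X2 ab j) ->
  pqcol q (col_of g X1) -> pqcol q (col_of g X2) ->
  reconfig q (col_of g X1) (col_of g X2).
Proof.
move=> E P1 P2; apply: (reconfig_independent
  (D := fun x => exists ab (j : 'I_t.+1), x = VX ab j /\ nat_of_ord j = i0)) => //.
  case=> [v|i|ab i] //= H; exists ab, i; split=> //.
  by have [//|/eqP Ni] := eqVneq (nat_of_ord i) i0; case: H; apply: E.
by move=> x y [ab [j [-> Ej]]] [cd [j' [-> Ej']]]; rewrite /gadj /=; case=> [] [_]; lia.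
Qed.

End Reconfiguration.

Section PathColourings.
Variables (p q t : nat).
Hypothesis q_gt0 : 0 < q.
Hypothesis p_ge4q : 4 * q <= p.
Hypothesis r_gt0 : 1 <= rr p q.
Hypothesis tq_mod : (t.+1 * q) %% p = rr p q %% p.

Local Notation r := (rr p q).
Local Notation k := (kk p q).

Lemma rr_lt : r < q.
Proof. exact: ltn_pmod. Qed.

Lemma p_divE : p = k * q + r.
Proof. exact: divn_eq. Qed.

Lemma modn_addMp x y M : x = y + M * p -> y < p -> x %% p = y.
Proof. by move=> -> y_lt; rewrite addnC modnMDl modn_small. Qed.

Lemma modnDr_addMp x y M : x + p = y + M * p -> y < p -> x %% p = y.
Proof. by move=> E y_lt; rewrite -modnDr; apply: (modn_addMp (M := M)). Qed.

Lemma pq_ok_modD x d : q <= d <= p - q -> pq_ok p q (x %% p) ((x + d) %% p).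
Proof.
move=> /andP[d_ge d_le]; rewrite -modnDml.
have : x %% p < p by rewrite ltn_mod; lia.
move: (x %% p) => a a_lt.
have [lt_p|ge_p] := ltnP (a + d) p.
  by rewrite modn_small //; rewrite /pq_ok /absd; lia.
by rewrite (@modn_addMp (a + d) (a + d - p) 1); rewrite /pq_ok /absd; lia.
Qed.

Lemma pq_ok_modE a b x d : a = x %% p -> b = (x + d) %% p -> q <= d <= p - q ->
  pq_ok p q a b.
Proof. by move=> -> ->; exact: pq_ok_modD. Qed.

Lemma cyc_offsetD a w : a < p -> w < p -> ((a + w) %% p + p - a) %% p = w.
Proof.
move=> a_lt w_lt; have [lt_p|ge_p] := ltnP (a + w) p.
  by rewrite (modn_small lt_p); apply: (@modn_addMp _ _ 1); lia.
rewrite (@modn_addMp (a + w) (a + w - p) 1); try lia.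
by rewrite modn_small; lia.
Qed.

Lemma pq_ok_window A B s w x j :
  B %% p = (A + w) %% p -> w < p -> x = (A + s) %% p -> w + q <= s <= p - q ->
  j < p -> in_cyc p A B j -> pq_ok p q x j.
Proof.
move=> B_eq w_lt -> /andP[s_ge s_le] j_lt.
rewrite /in_cyc {}B_eq -(modnDml A s) -(modnDml A w).
have : A %% p < p by rewrite ltn_mod; lia.
move: (A %% p) => a a_lt.
have j_eq : j = (a + (j + p - a) %% p) %% p.
  by rewrite modnDmr; symmetry; apply: (@modn_addMp _ _ 1); lia.
rewrite cyc_offsetD //; move: ((j + p - a) %% p) j_eq => o j_eq o_le.
apply/pq_okC/(@pq_ok_modE _ _ (a + o) (s - o)) => //; last by clear j_eq; lia.
by clear j_eq; congr (_ %% p); lia.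
Qed.

Lemma pq_ok_mid_window i d j : 1 <= i -> d < 2 * q -> j < p ->
  in_cyc p ((i + 3) * q - 1) ((i - 1) * q) j -> pq_ok p q ((i * q + d) %% p) j.
Proof.
move=> i_ge d_lt; have : q <= i * q by rewrite leq_pmull.
rewrite (mulnBl i 1) mul1n mulnDl => iq_ge.
apply: (@pq_ok_window _ _ (p + d - 3 * q + 1) (p - 4 * q + 1)); try lia.
  by rewrite -modnDr; congr (_ %% p); lia.
by rewrite -modnDr; congr (_ %% p); lia.
Qed.

Lemma pq_ok_end_window x j : x < 2 * q \/ x = p - 1 -> j < p ->
  in_cyc p (3 * q - 1) (p - q - 1) j -> pq_ok p q x j.
Proof.
case=> [x_lt|->].
  apply: (@pq_ok_window _ _ (p + x - 3 * q + 1) (p - 4 * q)); try lia.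
    by congr (_ %% p); lia.
  by symmetry; apply: (@modn_addMp _ _ 1); lia.
apply: (@pq_ok_window _ _ (p - 3 * q) (p - 4 * q)); try lia.
  by congr (_ %% p); lia.
by symmetry; apply: (@modn_addMp _ _ 0); lia.
Qed.

Definition tq_div := (t.+1 * q) %/ p.

Lemma tqE : t * q + q = tq_div * p + r.
Proof.
by rewrite -mulSnr {1}(divn_eq (t.+1 * q) p) tq_mod (modn_small (ltn_trans rr_lt _)) //; lia.
Qed.

Lemma tq_div_gt0 : 0 < tq_div.
Proof. by have := tqE; have := rr_lt; case: tq_div => [|n]; lia. Qed.

Lemma tq_div_ge : p <= tq_div * p.
Proof. by rewrite leq_pmull // tq_div_gt0. Qed.

Lemma t_ge3 : 3 <= t.
Proof.
have := tqE; have := tq_div_ge; have := rr_lt => r_lt m_ge.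
have [t_lt|//] := ltnP t 3.
have : t.+1 * q <= 3 * q by rewrite leq_mul2r t_lt orbT.
by rewrite mulSnr; lia.
Qed.

(* x_i^{ab} may be coloured x as far as the y_j are concerned. *)
Definition fits_window i x := x < p /\ forall j, j < p ->
  (if (i == 0) || (i == t) then in_cyc p (3 * q - 1) (p - q - 1) j
   else in_cyc p ((i + 3) * q - 1) ((i - 1) * q) j) -> pq_ok p q x j.

Lemma fits_window_end i x :
  (i == 0) || (i == t) -> x < 2 * q \/ x = p - 1 -> fits_window i x.
Proof.
move=> i_end x_ok; split; first lia.
by rewrite i_end => j; apply: pq_ok_end_window.
Qed.

Lemma fits_window_mid i d : 0 < i < t -> d < 2 * q -> fits_window i ((i * q + d) %% p).
Proof.
move=> /andP[i_gt0 i_lt] d_lt; split; first by rewrite ltn_mod; lia.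
have -> : (i == 0) || (i == t) = false by apply/negP => /orP[] /eqP; lia.
by move=> j; apply: pq_ok_mid_window.
Qed.

(* F i is the colour of x_i^{ab}; the ends a and b are not part of F. *)
Definition path_ok (F : nat -> nat) :=
  (forall i, i <= t -> fits_window i (F i)) /\
  (forall i, i < t -> pq_ok p q (F i) (F i.+1)).

Lemma eq_path_ok F F' : (forall i, i <= t -> F i = F' i) -> path_ok F -> path_ok F'.
Proof.
move=> E [F_win F_adj]; split=> i i_le; first by rewrite -E //; apply: F_win.
by rewrite -!E ?(ltnW i_le) //; apply: F_adj.
Qed.

Definition splice (A B : nat -> nat) s i := if i < s then A i else B i.

Lemma splice_succ A B s j : j <> s -> splice A B s j = splice A B s.+1 j.
Proof. by move=> j_neq; rewrite /splice; case: ltnP => j1; case: ltnP => j2 //; lia. Qed.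

Lemma splice_full A B i : i <= t -> splice A B t.+1 i = A i.
Proof. by rewrite /splice ltnS => ->. Qed.

Lemma path_ok_splice A B s : path_ok A -> path_ok B ->
  (forall i, i < t -> pq_ok p q (A i) (B i.+1)) -> path_ok (splice A B s).
Proof.
move=> [A_win A_adj] [B_win B_adj] AB; split=> i i_le; rewrite /splice.
  by case: ifP => _; [apply: A_win|apply: B_win].
by case: ifP => i_s; case: ifP => i1_s; [apply: A_adj|apply: AB|lia|apply: B_adj].
Qed.

Definition step_path d i := (i * q + d) %% p.

Lemma step_path_0 d : d < p -> step_path d 0 = d.
Proof. by move=> d_lt; rewrite /step_path modn_small. Qed.

Lemma step_path_t d : q <= d < 2 * q -> step_path d t = r + d - q.
Proof.
move=> d_bnd; apply: (modn_addMp (M := tq_div)); have := tqE; have := rr_lt; lia.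
Qed.

Lemma pq_ok_step_path d d' i : d <= q + d' -> q <= q + d' - d <= p - q ->
  pq_ok p q (step_path d i) (step_path d' i.+1).
Proof.
move=> d_le dist; apply: (pq_ok_modE (x := i * q + d) (d := q + d' - d)) => //.
by rewrite /step_path mulSnr; congr (_ %% p); lia.
Qed.

Lemma path_ok_step_path d : q <= d < 2 * q -> path_ok (step_path d).
Proof.
move=> d_bnd; split=> [i i_le|i i_lt]; last by apply: pq_ok_step_path; lia.
have [->|i_gt0] := posnP i; first by apply: fits_window_end; rewrite ?step_path_0; lia.
have [->|/eqP i_neq] := eqVneq i t.
  by apply: fits_window_end; rewrite ?eqxx ?orbT // step_path_t //; have := rr_lt; lia.
by apply: fits_window_mid; lia.
Qed.

Definition wrap_path i := if i == 0 then p - 1 else step_path (2 * q - 1) i.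

Lemma wrap_path_0 : wrap_path 0 = p - 1.
Proof. by []. Qed.

Lemma path_ok_wrap_path : path_ok wrap_path.
Proof.
have [step_win step_adj] := path_ok_step_path (d := 2 * q - 1) ltac:(lia).
split=> [i i_le|i i_lt]; rewrite /wrap_path.
  by case: eqP => [->|_]; [apply: fits_window_end; lia|apply: step_win].
case: eqP => [->|_] /=; last exact: step_adj.
apply: (pq_ok_modE (x := p - 1) (d := 3 * q)); first by rewrite modn_small; lia.
  have -> : step_path (2 * q - 1) 1 = 3 * q - 1.
    by rewrite /step_path; apply: (modn_addMp (M := 0)); lia.
  by symmetry; apply: (modn_addMp (M := 1)); lia.
lia.
Qed.

Definition low_path b c i :=
  if i == t then c else if i == t - 1 then b else (i * q) %% p.

Definition low_penult := ((t - 1) * q) %% p.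

Lemma low_path_t b c : low_path b c t = c.
Proof. by rewrite /low_path eqxx. Qed.

Lemma low_path_0 b c : low_path b c 0 = 0.
Proof.
have := t_ge3; rewrite /low_path; case: eqP => [|_]; first lia.
by case: eqP => [|_]; [lia|rewrite mul0n mod0n].
Qed.

Lemma low_path_std c i : i < t -> low_path low_penult c i = (i * q) %% p.
Proof.
by move=> i_lt; rewrite /low_path; case: eqP => [|_]; [lia|case: eqP => // ->].
Qed.

Lemma low_path_split {b c c'} : forall j, j <> t -> low_path b c j = low_path b c' j.
Proof. by move=> j j_neq; rewrite /low_path; case: eqP. Qed.

Lemma low_path_split_penult {b b' c} :
  forall j, j <> t - 1 -> low_path b c j = low_path b' c j.
Proof. by move=> j j_neq; rewrite /low_path; case: eqP => //; case: eqP. Qed.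

Lemma wrap_path_split : forall j, j <> 0 -> step_path (2 * q - 1) j = wrap_path j.
Proof. by move=> j; rewrite /wrap_path; case: eqP. Qed.

Lemma path_ok_low_path b c : fits_window (t - 1) b -> c < 2 * q \/ c = p - 1 ->
  pq_ok p q (((t - 2) * q) %% p) b -> pq_ok p q b c -> path_ok (low_path b c).
Proof.
have := t_ge3 => t_ge b_win c_ok before_b b_c.
split=> [i i_le|i i_lt]; rewrite /low_path.
  case: eqP => [->|i_neq]; first by apply: fits_window_end; rewrite ?eqxx ?orbT.
  case: eqP => [->|i_npen] //.
  have [->|i_gt0] := posnP i; first by apply: fits_window_end; rewrite ?mul0n ?mod0n; lia.
  by rewrite -[i * q]addn0; apply: fits_window_mid; lia.
have -> : (i == t) = false by apply/eqP; lia.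
have [i1_t|i1_neq] := eqVneq i.+1 t.
  by have -> : i == t - 1 by apply/eqP; lia.
have [i1_pen|i1_npen] := eqVneq i.+1 (t - 1).
  have -> : (i == t - 1) = false by apply/eqP; lia.
  by have -> : i = t - 2 by lia.
have -> : (i == t - 1) = false by apply/eqP; lia.
by apply: (pq_ok_modE (x := i * q) (d := q)) => //; [rewrite mulSnr|lia].
Qed.

Lemma low_penultE : low_penult = p + r - 2 * q.
Proof.
have := tqE; have := rr_lt; have := tq_div_ge; have := t_ge3 => t_ge r_lt m_ge tq.
have : 3 * q <= t * q by rewrite leq_mul2r t_ge orbT.
by rewrite /low_penult mulnBl mul1n => tq_ge; apply: (modnDr_addMp (M := tq_div)); lia.
Qed.

Lemma path_ok_low_std c : c = q \/ c = 0 -> path_ok (low_path low_penult c).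
Proof.
have := t_ge3; have := rr_lt => r_lt t_ge c_val; apply: path_ok_low_path.
- by rewrite /low_penult -[_ * q]addn0; apply: fits_window_mid; lia.
- by left; case: c_val => ->; lia.
- apply: (pq_ok_modE (x := (t - 2) * q) (d := q)) => //; last lia.
  by rewrite /low_penult -mulSnr; congr (_ %% p); congr (_ * q); lia.
- by rewrite low_penultE /pq_ok /absd; case: c_val => ->; lia.
Qed.

Lemma path_ok_low_mid c : c = q \/ c = 2 * q - 1 \/ c = p - 1 \/ c = 0 ->
  path_ok (low_path (p - q - 1) c).
Proof.
have := t_ge3; have := tqE; have := tq_div_ge; have := rr_lt => r_lt m_ge tq t_ge c_val.
have tq_ge : 3 * q <= t * q by rewrite leq_mul2r t_ge orbT.
apply: path_ok_low_path.
- have -> : p - q - 1 = ((t - 1) * q + (q - r - 1)) %% p.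
    by symmetry; apply: (modnDr_addMp (M := tq_div)); rewrite ?mulnBl; lia.
  by apply: fits_window_mid; lia.
- by case: c_val => [->|[->|[->|->]]]; lia.
- have -> : ((t - 2) * q) %% p = p + r - 3 * q.
    by rewrite mulnBl; apply: (modnDr_addMp (M := tq_div)); lia.
  by rewrite /pq_ok /absd; lia.
- by rewrite /pq_ok /absd; case: c_val => [->|[->|[->|->]]]; lia.
Qed.

Lemma gamma_gt0 j : 0 < j -> gamma p q j = j * q + r.
Proof. by rewrite /gamma; case: j. Qed.

Lemma gamma_eq0 j : (gamma p q j == 0) = (j == 0).
Proof. by rewrite /gamma; case: j => //= j; case: eqP => //; lia. Qed.

Lemma mulq_bounds j : 0 < j < k -> q <= j * q /\ j * q + q <= k * q.
Proof.
move=> /andP[j_gt0 j_lt]; split; first by rewrite leq_pmull.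
by rewrite -mulSnr leq_mul2r j_lt orbT.
Qed.

Lemma gamma_lt j : j < k -> gamma p q j < p.
Proof.
have := p_divE; have := rr_lt => r_lt p_eq j_lt.
have [->|j_gt0] := posnP j; first by rewrite /gamma /=; lia.
have := @mulq_bounds j; rewrite gamma_gt0 //; lia.
Qed.

Lemma pq_ok_gamma a b : a < k -> b < k -> a <> b -> pq_ok p q (gamma p q a) (gamma p q b).
Proof.
have := p_divE; have := rr_lt => r_lt p_eq.
wlog a_lt_b : a b / a < b => [gen a_lt b_lt a_neq|a_lt b_lt _].
  have [a_lt_b|b_lt_a|//] := ltngtP a b; first exact: gen a_lt_b a_lt b_lt a_neq.
  by apply/pq_okC; apply: gen b_lt_a b_lt a_lt _ => E; apply: a_neq.
have := @mulq_bounds b ltac:(lia); rewrite /pq_ok /absd (@gamma_gt0 b); last lia.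
have [->|a_gt0] := posnP a; first by rewrite /gamma /=; lia.
have : a.+1 * q <= b * q by rewrite leq_mul2r a_lt_b orbT.
by have := @mulq_bounds a ltac:(lia); rewrite gamma_gt0 // mulSnr; lia.
Qed.

Definition std_path_col ga gb i :=
  if ga == 0 then (i.+1 * q) %% p
  else if gb == 0 then (if i == t then q else (i * q) %% p)
  else (if i == t then 0 else (i * q) %% p).

Lemma std_path_colE ga gb i : i <= t -> std_path_col ga gb i =
  if ga == 0 then step_path q i else low_path low_penult (if gb == 0 then q else 0) i.
Proof.
move=> i_le; rewrite /std_path_col /step_path -mulSnr.
case: (ga == 0) => //; have [->|i_neq] := eqVneq i t; first by rewrite !low_path_t; case: ifP.
by rewrite low_path_std; [case: ifP|lia].
Qed.

Definition path_between ga gb F :=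
  path_ok F /\ pq_ok p q ga (F 0) /\ pq_ok p q (F t) gb.

Lemma std_path_col_eq0 ga gb ga' gb' : (ga == 0) = (ga' == 0) ->
  (gb == 0) = (gb' == 0) -> std_path_col ga gb =1 std_path_col ga' gb'.
Proof. by move=> a_eq b_eq i; rewrite /std_path_col a_eq b_eq. Qed.

Lemma eq_path_between ga gb F F' : (forall i, i <= t -> F i = F' i) ->
  path_between ga gb F -> path_between ga gb F'.
Proof.
move=> E [F_ok [start_ok end_ok]].
by split; [exact: eq_path_ok F_ok|rewrite -!E].
Qed.

Lemma path_between_std a b : a < k -> b < k -> a <> b ->
  path_between (gamma p q a) (gamma p q b) (std_path_col (gamma p q a) (gamma p q b)).
Proof.
have := p_divE; have := rr_lt => r_lt p_eq a_lt b_lt a_neq.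
apply: (eq_path_between (fun i i_le => esym (std_path_colE _ _ i_le))).
rewrite !gamma_eq0; have [a0|a_gt0] := posnP a.
  have [bq_ge bq_le] := @mulq_bounds b ltac:(lia).
  rewrite a0 (@gamma_gt0 b) /gamma /=; last lia.
  split; first by apply: path_ok_step_path; lia.
  rewrite step_path_0 ?step_path_t /pq_ok /absd; lia.
have [aq_ge aq_le] := @mulq_bounds a ltac:(lia); rewrite (@gamma_gt0 a) //=.
have [b0|b_gt0] := posnP b.
  rewrite b0 /gamma /=; split; first by apply: path_ok_low_std; left.
  by rewrite low_path_0 low_path_t /pq_ok /absd; lia.
have [bq_ge bq_le] := @mulq_bounds b ltac:(lia); rewrite (@gamma_gt0 b) //=.
split; first by apply: path_ok_low_std; right.
by rewrite low_path_0 low_path_t /pq_ok /absd; lia.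
Qed.

Section Graph.
Variables (T : finType) (e : rel T).

Lemma col_of_pqcol g X :
  (forall v, g v < p) -> (forall a b, e a b -> pq_ok p q (g a) (g b)) ->
  (forall ab : dedge e, path_between (g (sval ab).1) (g (sval ab).2) (X ab)) ->
  pqcol q (col_of g X : gvtx e p t -> nat).
Proof.
move=> g_lt g_ok X_ok; split.
  case=> [v|i|ab i] /=; [exact: g_lt|exact: ltn_ord|].
  by have [[X_win _] _] := X_ok ab; case: (X_win i (leq_ord i)).
suff adj0 (x y : gvtx e p t) : gadj0 q x y -> pq_ok p q (col_of g X x) (col_of g X y).
  by move=> x y [/adj0|/adj0/pq_okC].
case: x => [a|i|ab i]; case: y => [b|j|cd j] //=.
- exact: g_ok.
- by case=> <- ->; have [_ []] := X_ok cd.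
- by case=> <- ->; have [_ []] := X_ok ab.
- by have [[X_win _] _] := X_ok ab; have [_ /(_ j (ltn_ord j))] := X_win i (leq_ord i).
- case=> <- j_eq; have [[_ X_adj] _] := X_ok ab.
  by rewrite j_eq; apply: X_adj; have := ltn_ord j; lia.
Qed.

Definition std_col (g : T -> nat) : gvtx e p t -> nat :=
  col_of g (fun ab => std_path_col (g (sval ab).1) (g (sval ab).2)).

Lemma std_col_pqcol h : kcol e k h -> pqcol q (std_col (fun v => gamma p q (h v))).
Proof.
move=> [h_lt h_ok]; apply: col_of_pqcol => [v|a b ab|[[a b] ab]].
- exact: gamma_lt.
- by apply: pq_ok_gamma; [apply: h_lt|apply: h_lt|apply: h_ok].
- by apply: path_between_std; [apply: h_lt|apply: h_lt|apply: h_ok].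
Qed.

Hypothesis e_irr : irreflexive e.

Section RecolourFromZero.
Variables (u : T) (h0 h1 : T -> nat).
Hypothesis e_sym : symmetric e.
Hypothesis h0_col : kcol e k h0.
Hypothesis h1_col : kcol e k h1.
Hypothesis h01 : forall v, v <> u -> h0 v = h1 v.
Hypothesis h0u : h0 u = 0.
Hypothesis h1u : 0 < h1 u.

Local Notation m := (h1 u).

(* The possible values of h0 (= h1) on the neighbours of u. *)
Definition nbr_colour j := 0 < j < k /\ j <> m.

Lemma nbr_colour_r v : e u v -> nbr_colour (h0 v).
Proof.
move=> uv; have [h0_lt h0_ok] := h0_col; have [_ h1_ok] := h1_col.
have v_neq : v <> u by move=> vu; rewrite vu e_irr in uv.
split; last by rewrite h01 //; apply/nesym/h1_ok.
by rewrite h0_lt andbT lt0n; apply/eqP; rewrite -h0u; apply/nesym/h0_ok.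
Qed.

Lemma nbr_colour_l v : e v u -> nbr_colour (h0 v).
Proof. by rewrite e_sym; apply: nbr_colour_r. Qed.

Lemma nbr_colour_gamma j : nbr_colour j ->
  gamma p q j = j * q + r /\ q <= j * q /\ j * q + q <= k * q.
Proof. by case=> j_bnd _; rewrite gamma_gt0; [split; [|apply: mulq_bounds]|case/andP: j_bnd]. Qed.

Definition local_col U PU PV : gvtx e p t -> nat :=
  col_of (fun v => if v == u then U else gamma p q (h0 v))
    (fun ab => if (sval ab).1 == u then PU else if (sval ab).2 == u then PV
               else std_path_col (gamma p q (h0 (sval ab).1)) (gamma p q (h0 (sval ab).2))).

Definition free_of_nbrs x := forall j, nbr_colour j -> pq_ok p q x (gamma p q j).

Definition out_path_ok U F := path_ok F /\ pq_ok p q U (F 0) /\ free_of_nbrs (F t).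
Definition in_path_ok U F := path_ok F /\ pq_ok p q (F t) U /\ free_of_nbrs (F 0).

Definition local_ok U PU PV :=
  [/\ U < p, free_of_nbrs U, out_path_ok U PU & in_path_ok U PV].

Lemma local_ok_pqcol U PU PV : local_ok U PU PV -> pqcol q (local_col U PU PV).
Proof.
case=> U_lt U_free [PU_ok [PU_0 PU_t]] [PV_ok [PV_t PV_0]].
have [h0_lt h0_ok] := h0_col.
apply: col_of_pqcol => [v|a b ab|[[a b] ab]] /=.
- by case: eqP => _ //; apply/gamma_lt/h0_lt.
- move: ab; case: eqP => [->|au]; case: eqP => [->|bu] ab.
  + by rewrite e_irr in ab.
  + exact/U_free/nbr_colour_r.
  + exact/pq_okC/U_free/nbr_colour_l.
  + by apply: pq_ok_gamma; [apply: h0_lt|apply: h0_lt|apply: h0_ok].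
- move: ab; case: eqP => [->|au] ab.
    have /negbTE -> : b != u by apply/eqP => bu; rewrite bu e_irr in ab.
    by split=> //; split=> //; apply/PU_t/nbr_colour_r.
  case: eqP => [bu|bu].
    by split=> //; split=> //; apply/pq_okC/PV_0/nbr_colour_l; rewrite -bu.
  by apply: path_between_std; [apply: h0_lt|apply: h0_lt|apply: h0_ok].
Qed.

Lemma eq_local_col U PU PV PU' PV' : (forall i, i <= t -> PU i = PU' i) ->
  (forall i, i <= t -> PV i = PV' i) -> local_col U PU PV =1 local_col U PU' PV'.
Proof.
move=> PU_eq PV_eq [v|i|ab i] //=.
by case: ifP => _; [apply: PU_eq|case: ifP => _ //; apply: PV_eq]; rewrite -ltnS.
Qed.

Lemma reconfig_u U U' PU PV : local_ok U PU PV -> local_ok U' PU PV ->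
  reconfig q (local_col U PU PV) (local_col U' PU PV).
Proof.
move=> ok ok'; apply: (reconfig_at_vertex (u := u) e_irr _
  (local_ok_pqcol ok) (local_ok_pqcol ok')).
by move=> v /eqP/negbTE ->.
Qed.

Lemma reconfig_out U PU PU' PV i0 : (forall j, j <> i0 -> PU j = PU' j) ->
  local_ok U PU PV -> local_ok U PU' PV ->
  reconfig q (local_col U PU PV) (local_col U PU' PV).
Proof.
move=> PU_eq ok ok'.
apply: (reconfig_at_index (i0 := i0) _ (local_ok_pqcol ok) (local_ok_pqcol ok')).
by move=> ab j j_neq /=; case: ifP => // _; apply: PU_eq.
Qed.

Lemma reconfig_in U PU PV PV' i0 : (forall j, j <> i0 -> PV j = PV' j) ->
  local_ok U PU PV -> local_ok U PU PV' ->
  reconfig q (local_col U PU PV) (local_col U PU PV').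
Proof.
move=> PV_eq ok ok'.
apply: (reconfig_at_index (i0 := i0) _ (local_ok_pqcol ok) (local_ok_pqcol ok')).
by move=> ab j j_neq /=; do 2 case: ifP => // _; apply: PV_eq.
Qed.

Lemma local_col_h0 :
  local_col 0 (step_path q) (low_path low_penult q) =1 std_col (fun v => gamma p q (h0 v)).
Proof.
case=> [v|i|[[a b] /= ab] i] //=; first by case: eqP => [->|]; rewrite ?h0u.
have i_le : i <= t by rewrite -ltnS.
move: ab; case: eqP => [->|au] ab; first by rewrite h0u std_path_colE.
case: eqP => [bu|//]; move: ab; rewrite bu => /nbr_colour_l/nbr_colour_gamma[ga _].
by rewrite h0u std_path_colE // ga; have := rr_lt; case: eqP => //; lia.
Qed.

Lemma local_col_h1 : local_col (gamma p q m) (low_path low_penult 0) (low_path low_penult 0)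
  =1 std_col (fun v => gamma p q (h1 v)).
Proof.
case=> [v|i|[[a b] /= ab] i] //=; first by case: eqP => [->|/h01 ->].
have i_le : i <= t by rewrite -ltnS.
have gamma_m_neq0 : gamma p q m == 0 = false by rewrite gamma_gt0 //; apply/eqP; lia.
move: ab; case: eqP => [->|/h01 ha] ab.
  have bu : b <> u by move=> bu; rewrite bu e_irr in ab.
  have /nbr_colour_gamma[gb _] := nbr_colour_r ab.
  rewrite std_path_colE // -(h01 bu) gamma_m_neq0 gb.
  by have := rr_lt; case: eqP => //; lia.
case: eqP => [bu|/h01 <-]; last by rewrite ha.
move: ab; rewrite bu => /nbr_colour_l/nbr_colour_gamma[ga _].
by rewrite std_path_colE // -ha ga gamma_m_neq0; have := rr_lt; case: eqP => //; lia.
Qed.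

Lemma free_of_nbrs_small x : x <= r -> free_of_nbrs x.
Proof.
move=> x_le j /nbr_colour_gamma[-> jq]; have := p_divE; rewrite /pq_ok /absd; lia.
Qed.

Lemma free_of_nbrs_gamma : free_of_nbrs (gamma p q m).
Proof.
move=> j [/andP[j_gt0 j_lt] j_neq]; have [m_lt _] := h1_col.
by apply/pq_okC/pq_ok_gamma => //; apply: m_lt.
Qed.

Lemma in_path_ok_low U b c :
  path_ok (low_path b c) -> pq_ok p q c U -> in_path_ok U (low_path b c).
Proof.
by move=> low_ok cU; rewrite /in_path_ok low_path_t low_path_0; split=> //; split=> //;
  apply: free_of_nbrs_small.
Qed.

Lemma local_ok_start : local_ok 0 (step_path q) (low_path low_penult q).
Proof.
have := rr_lt => r_lt; split; [lia|exact: free_of_nbrs_small|split|].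
- by apply: path_ok_step_path; lia.
- rewrite step_path_0 ?step_path_t; try lia.
  by split; [rewrite /pq_ok /absd; lia|apply: free_of_nbrs_small; lia].
- by apply: in_path_ok_low; [apply: path_ok_low_std; left|rewrite /pq_ok /absd; lia].
Qed.

Lemma reconfig_splice_out U A B PV : (forall s, local_ok U (splice A B s) PV) ->
  reconfig q (local_col U B PV) (local_col U A PV).
Proof.
move=> spliced_ok.
apply: (eq_reconfig (c1 := local_col U (splice A B 0) PV) (d1 := local_col U (splice A B t.+1) PV)).
- exact: eq_local_col.
- by apply: eq_local_col => i i_le //; apply: splice_full.
apply: (reconfig_chain (f := fun s => local_col U (splice A B s) PV)).
  exact/local_ok_pqcol.
by move=> s _; apply: (reconfig_out (i0 := s)); first exact: splice_succ.
Qed.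

Section LargeColour.
Hypothesis m_ge2 : 2 <= m.

Lemma local_ok_jump c : c = q \/ c = 0 ->
  local_ok (gamma p q m) (step_path q) (low_path low_penult c).
Proof.
have m_lt := proj1 h1_col u; have := rr_lt; have := p_divE => p_eq r_lt c_val.
have [mq_ge mq_le] := @mulq_bounds m ltac:(lia).
have : 2 * q <= m * q by rewrite leq_mul2r m_ge2 orbT.
split; [exact: gamma_lt|exact: free_of_nbrs_gamma|split|].
- by apply: path_ok_step_path; lia.
- rewrite step_path_0 ?step_path_t ?gamma_gt0; try lia.
  by split; [rewrite /pq_ok /absd; lia|apply: free_of_nbrs_small; lia].
- apply: in_path_ok_low; first exact: path_ok_low_std.
  by rewrite gamma_gt0 // /pq_ok /absd; case: c_val => ->; lia.
Qed.

Lemma local_ok_rotate s : local_ok (gamma p q m)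
  (splice (low_path low_penult 0) (step_path q) s) (low_path low_penult 0).
Proof.
have [U_lt U_free [up_ok [up_start up_end]] low_in] := local_ok_jump (or_intror erefl).
have m_lt := proj1 h1_col u; have := rr_lt; have := p_divE => p_eq r_lt.
have [mq_ge mq_le] := @mulq_bounds m ltac:(lia).
have [low_ok _] := low_in; split=> //; split; last split.
- apply: path_ok_splice => // i i_lt; rewrite low_path_std //.
  apply: (pq_ok_modE (x := i * q) (d := 2 * q)) => //; last lia.
  by rewrite /step_path mulSnr; congr (_ %% p); lia.
- rewrite /splice; case: ifP => _ //; rewrite low_path_0 gamma_gt0 // /pq_ok /absd; lia.
- rewrite /splice; case: ifP => _ //; rewrite low_path_t; exact: free_of_nbrs_small.
Qed.

Lemma reconfig_large_colour :
  reconfig q (local_col 0 (step_path q) (low_path low_penult q))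
             (local_col (gamma p q m) (low_path low_penult 0) (low_path low_penult 0)).
Proof.
have jump_q := local_ok_jump (or_introl erefl).
have jump_0 := local_ok_jump (or_intror erefl).
apply: (reconfig_trans (reconfig_u local_ok_start jump_q)).
apply: (reconfig_trans (reconfig_in low_path_split jump_q jump_0)).
exact: reconfig_splice_out local_ok_rotate.
Qed.

End LargeColour.

Section UnitColour.
Hypothesis m1 : m = 1.

Lemma free_of_nbrs_unit x : x <= q + r -> free_of_nbrs x.
Proof.
move=> x_le j [j_bnd j_neq]; have /nbr_colour_gamma[-> [jq_ge jq_le]] : nbr_colour j by [].
have : 2 * q <= j * q by rewrite leq_mul2r; apply/orP; right; lia.
by have := p_divE; rewrite /pq_ok /absd; lia.
Qed.

Lemma local_ok_raise s : local_ok 0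
  (splice (step_path q) (step_path (2 * q - 1)) s) (low_path low_penult q).
Proof.
have [_ _ [up_ok _] low_in] := local_ok_start; have := rr_lt => r_lt.
split=> //; [lia|exact: free_of_nbrs_small|split; last split].
- apply: path_ok_splice => //; first by apply: path_ok_step_path; lia.
  by move=> i _; apply: pq_ok_step_path; lia.
- by rewrite /splice; case: ifP => _; rewrite ?step_path_0 /pq_ok /absd; lia.
- rewrite /splice; case: ifP => _; rewrite step_path_t; try lia.
  all: by apply: free_of_nbrs_unit; lia.
Qed.

Definition mid_end c := [\/ c = q, c = 2 * q - 1, c = p - 1 | c = 0].

Lemma local_ok_shifted U c : U <= q + r -> pq_ok p q U (2 * q - 1) ->
  mid_end c -> pq_ok p q c U ->
  local_ok U (step_path (2 * q - 1)) (low_path (p - q - 1) c).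
Proof.
have := rr_lt => r_lt U_le U_x0 c_val cU.
split; [lia|exact: free_of_nbrs_unit|split; last split|].
- by apply: path_ok_step_path; lia.
- by rewrite step_path_0 //; lia.
- by rewrite step_path_t; [apply: free_of_nbrs_unit|]; lia.
- by apply: in_path_ok_low => //; apply: path_ok_low_mid; case: c_val; tauto.
Qed.

Lemma local_ok_wrapped U c : U <= q + r -> pq_ok p q U (p - 1) ->
  mid_end c -> pq_ok p q c U -> local_ok U wrap_path (low_path (p - q - 1) c).
Proof.
have := rr_lt => r_lt U_le U_x0 c_val cU.
split; [lia|exact: free_of_nbrs_unit|split; last split|].
- exact: path_ok_wrap_path.
- by [].
- rewrite -wrap_path_split; last by have := t_ge3; lia.
  by rewrite step_path_t; [apply: free_of_nbrs_unit|]; lia.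
- by apply: in_path_ok_low => //; apply: path_ok_low_mid; case: c_val; tauto.
Qed.

Lemma local_ok_lower s : local_ok (q + r)
  (splice (low_path low_penult 0) wrap_path s) (low_path low_penult 0).
Proof.
have := rr_lt => r_lt; have := t_ge3 => t_ge.
have low_ok := path_ok_low_std (or_intror erefl).
split; [lia|apply: free_of_nbrs_unit; lia|split; last split|].
- apply: path_ok_splice => //; first exact: path_ok_wrap_path.
  move=> i i_lt; rewrite low_path_std // -wrap_path_split //.
  apply: (pq_ok_modE (x := i * q) (d := 3 * q - 1)) => //; last lia.
  by rewrite /step_path mulSnr; congr (_ %% p); lia.
- by rewrite /splice; case: ifP => _; rewrite ?low_path_0 ?wrap_path_0 /pq_ok /absd; lia.
- rewrite /splice; case: ifP => _; first by rewrite low_path_t; apply: free_of_nbrs_small.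
  rewrite -wrap_path_split; last lia.
  by rewrite step_path_t; [apply: free_of_nbrs_unit|]; lia.
- by apply: in_path_ok_low => //; rewrite /pq_ok /absd; lia.
Qed.

(* gamma 1 = q + r is too close to q, the colour of x_0 on the paths leaving u
   and of x_t on the paths entering u.  The paths leaving u are first raised by
   q - 1 (their x_t gets r + q - 1, still compatible with gamma j for j >= 2);
   then u goes to q + r via q - 1 while those x_0 and the x_t entering u are
   parked at p - 1, the x_{t-1} entering u being moved to p - q - 1 meanwhile. *)
Lemma reconfig_unit_colour :
  reconfig q (local_col 0 (step_path q) (low_path low_penult q))
             (local_col (gamma p q m) (low_path low_penult 0) (low_path low_penult 0)).
Proof.
have := rr_lt; have := p_divE => p_eq r_lt.
have -> : gamma p q m = q + r by rewrite m1 gamma_gt0 // mul1n.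
pose shifted := step_path (2 * q - 1); pose mid := p - q - 1.
have s1 : local_ok 0 shifted (low_path low_penult q) := local_ok_raise 0.
have s2 : local_ok 0 shifted (low_path mid q).
  by apply: local_ok_shifted; rewrite /mid_end /pq_ok /absd; try constructor; lia.
have s3 : local_ok 0 shifted (low_path mid (2 * q - 1)).
  by apply: local_ok_shifted; rewrite /mid_end /pq_ok /absd; try constructor; lia.
have s4 : local_ok (q - 1) shifted (low_path mid (2 * q - 1)).
  by apply: local_ok_shifted; rewrite /mid_end /pq_ok /absd; try constructor; lia.
have s5 : local_ok (q - 1) wrap_path (low_path mid (2 * q - 1)).
  by apply: local_ok_wrapped; rewrite /mid_end /pq_ok /absd; try constructor; lia.
have s6 : local_ok (q - 1) wrap_path (low_path mid (p - 1)).
  by apply: local_ok_wrapped; rewrite /mid_end /pq_ok /absd; try constructor; lia.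
have s7 : local_ok (q + r) wrap_path (low_path mid (p - 1)).
  by apply: local_ok_wrapped; rewrite /mid_end /pq_ok /absd; try constructor; lia.
have s8 : local_ok (q + r) wrap_path (low_path mid 0).
  by apply: local_ok_wrapped; rewrite /mid_end /pq_ok /absd; try constructor; lia.
have s9 : local_ok (q + r) wrap_path (low_path low_penult 0) := local_ok_lower 0.
apply: reconfig_trans (reconfig_sym (reconfig_splice_out local_ok_raise)) _.
apply: reconfig_trans (reconfig_in low_path_split_penult s1 s2) _.
apply: reconfig_trans (reconfig_in low_path_split s2 s3) _.
apply: reconfig_trans (reconfig_u s3 s4) _.
apply: reconfig_trans (reconfig_out wrap_path_split s4 s5) _.
apply: reconfig_trans (reconfig_in low_path_split s5 s6) _.
apply: reconfig_trans (reconfig_u s6 s7) _.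
apply: reconfig_trans (reconfig_in low_path_split s7 s8) _.
apply: reconfig_trans (reconfig_in low_path_split_penult s8 s9) _.
exact: reconfig_splice_out local_ok_lower.
Qed.

End UnitColour.

Lemma reconfig_from_zero :
  reconfig q (std_col (fun v => gamma p q (h0 v))) (std_col (fun v => gamma p q (h1 v))).
Proof.
apply: eq_reconfig local_col_h0 local_col_h1 _.
have [m_le1|m_ge2] := leqP m 1; last exact: reconfig_large_colour.
by apply: reconfig_unit_colour; lia.
Qed.

End RecolourFromZero.

(* The standard path colourings only see whether an end is coloured 0. *)
Lemma reconfig_nonzero u h h' : kcol e k h -> kcol e k h' ->
  (forall v, v <> u -> h v = h' v) -> 0 < h u -> 0 < h' u ->
  reconfig q (std_col (fun v => gamma p q (h v))) (std_col (fun v => gamma p q (h' v))).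
Proof.
move=> h_col h'_col h_h' hu h'u.
have h_eq0 v : (h v == 0) = (h' v == 0).
  by have [->|/eqP/h_h' ->] := eqVneq v u; rewrite ?(gtn_eqF hu) ?(gtn_eqF h'u).
apply: (reconfig_independent (D := eq^~ (VG u)) (std_col_pqcol h_col) (std_col_pqcol h'_col)).
  case=> [v|i|ab i] //=; last by case; apply: std_path_col_eq0; rewrite !gamma_eq0.
  by have [->|/eqP/h_h' ->] := eqVneq v u.
by move=> x y -> ->; rewrite /gadj /= e_irr; case.
Qed.

End Graph.
End PathColourings.

Theorem lemma3p4 (p q : nat) (T : finType) (e : rel T) (t : nat)
    (h h' : T -> nat) (u : T) (eta : gvtx e p t -> nat) :
  0 < q -> 4 * q <= p -> 1 <= rr p q ->
  (* t is the smallest positive integer with (t+1) q = r (mod p) *)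
  0 < t -> (t.+1 * q) %% p = rr p q %% p ->
  (forall t', 0 < t' -> (t'.+1 * q) %% p = rr p q %% p -> t <= t') ->
  (* G is a simple graph *)
  symmetric e -> irreflexive e ->
  kcol e (kk p q) h -> kcol e (kk p q) h' ->
  h u <> h' u -> (forall v, v <> u -> h v = h' v) ->
  pqcol q eta ->
  (forall i : 'I_p, eta (VY i) = nat_of_ord i) ->
  (forall v, eta (VG v) = gamma p q (h v)) ->
  (forall ab : dedge e, std_path q eta ab) ->
  exists eta' : gvtx e p t -> nat,
    [/\ pqcol q eta',
        (forall ab : dedge e, std_path q eta' ab),
        (forall v, eta' (VG v) = gamma p q (h' v)) &
        reconfig q eta eta'].
Proof.
move=> q_gt0 p_ge4q r_gt0 _ tq_mod _ e_sym e_irr h_col h'_col hu_neq h_h' _ eta_y eta_G eta_std.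
exists (std_col q (fun v => gamma p q (h' v))); split=> //.
  exact: std_col_pqcol.
have eta_std_col : std_col q (fun v => gamma p q (h v)) =1 eta.
  by case=> [v|i|ab i] /=; rewrite ?eta_y ?eta_std ?eta_G.
apply: eq_reconfig eta_std_col (frefl _) _.
have [hu0|hu_gt0] := posnP (h u).
  by apply: (reconfig_from_zero _ _ _ _ _ _ _ _ _ hu0) => //; lia.
have [h'u0|h'u_gt0] := posnP (h' u).
  by apply/reconfig_sym/(reconfig_from_zero _ _ _ _ _ _ _ _ _ h'u0) => // v /h_h' ->.
by apply: (reconfig_nonzero _ _ _ _ _ h_col h'_col h_h').
Qed.
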